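(* Let $b$ be a positive real number, let $T=(V,E)$ be a tree with $|V|\ge3$, and let $\ell:V\to[0,1]$ satisfy $\sum_{v\in V}\ell(v)\le1$. For $v\in V$ let $L(v)$ be the set of leaves of $T$ adjacent to $v$, and suppose that $\ell(v)+\sum_{u\in L(v)}\ell(u)\ge |L(v)|/b$ for all $v\in V$. Then $T$ has at most $b$ leaves. *)

From HB Require Import structures.
From mathcomp Require Import all_boot all_order all_algebra.
From mathcomp Require Import reals.
Set Implicit Arguments. Unset Strict Implicit. Unset Printing Implicit Defensive.

Definition simple_graph (V : finType) (e : rel V) : Prop :=
  symmetric e /\ irreflexive e.

Definition connected_graph (V : finType) (e : rel V) : Prop :=
  forall x y : V, connect e x y.

Definition acyclic_graph (V : finType) (e : rel V) : Prop :=
  forall c : seq V, uniq c -> cycle e c -> size c < 3.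

Definition is_tree (V : finType) (e : rel V) : Prop :=
  [/\ simple_graph e, connected_graph e & acyclic_graph e].

Definition nbhd (V : finType) (e : rel V) (v : V) : {set V} := [set u | e v u].
Definition deg (V : finType) (e : rel V) (v : V) : nat := #|nbhd e v|.

Definition leaves (V : finType) (e : rel V) : {set V} := [set v | deg e v == 1%N].

Definition adj_leaves (V : finType) (e : rel V) (v : V) : {set V} :=
  nbhd e v :&: leaves e.

From HB Require Import structures.
From mathcomp Require Import all_boot all_order all_algebra.
From mathcomp Require Import reals.
Import Order.TTheory GRing.Theory Num.Theory.
Set Implicit Arguments. Unset Strict Implicit.
Local Open Scope ring_scope.

(* When the tree has at least three vertices no two leaves are adjacent, so
   every leaf hangs off exactly one non-leaf and the sets L(v), v a non-leaf,
   partition the leaves.  Summing the hypothesis over the non-leaves v gives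
   #leaves / b <= sum_v ell(v) <= 1. *)

Section AdjacentLeaves.

Variables (V : finType) (e : rel V).
Hypotheses (sym_e : symmetric e) (conn_e : connected_graph e).

Lemma leaf_nbhd u w : u \in leaves e -> e u w -> nbhd e u = [set w].
Proof.
rewrite inE /deg => /cards1P [x nbhd_u] euw.
have : w \in nbhd e u by rewrite inE.
by rewrite nbhd_u inE => /eqP ->.
Qed.

(* Two adjacent leaves span a connected component, hence all of V. *)
Lemma adjacent_leaves_card u w :
  u \in leaves e -> w \in leaves e -> e u w -> (#|V| <= 2)%N.
Proof.
move=> leaf_u leaf_w euw.
have nbhd_u := leaf_nbhd leaf_u euw.
have nbhd_w := leaf_nbhd leaf_w (etrans (sym_e w u) euw).
have closed_uw : closed e [set u; w].
  apply: intro_closed; first exact: sym_connect_sym.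
  move=> x y exy; rewrite !inE => /orP [] /eqP def_x.
  - have : y \in nbhd e u by rewrite inE -def_x.
    by rewrite nbhd_u inE => ->; rewrite orbT.
  - have : y \in nbhd e w by rewrite inE -def_x.
    by rewrite nbhd_w inE => ->.
have all_uw : [set: V] \subset [set u; w].
  apply/subsetP => z _.
  by rewrite -(closed_connect closed_uw (conn_e u z)) !inE eqxx.
rewrite -cardsT (leq_trans (subset_leq_card all_uw)) // cards2.
by case: (u != w).
Qed.

Hypothesis card_V : (3 <= #|V|)%N.

Lemma adj_leaf_nonleaf u w : u \in leaves e -> e u w -> w \notin leaves e.
Proof.
move=> leaf_u euw; apply/negP => leaf_w.
by move: card_V; rewrite leqNgt ltnS (adjacent_leaves_card leaf_u leaf_w euw).
Qed.

Lemma sum_adj_leaves (M : nmodType) (f : V -> M) :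
  \sum_(v in ~: leaves e) \sum_(u in adj_leaves e v) f u =
  \sum_(u in leaves e) f u.
Proof.
rewrite (exchange_big_dep (mem (leaves e))) /=; last first.
  by move=> v u _; rewrite inE => /andP [].
apply: eq_bigr => u leaf_u.
have [w nbhd_u] : exists w, nbhd e u = [set w].
  by apply/cards1P; move: leaf_u; rewrite inE.
have : w \in nbhd e u by rewrite nbhd_u set11.
rewrite inE => euw.
rewrite (big_pred1 w) // => v /=.
rewrite /adj_leaves in_setI leaf_u andbT.
have -> : (u \in nbhd e v) = (v \in nbhd e u) by rewrite !inE sym_e.
rewrite nbhd_u inE; case: eqVneq => [->|]; rewrite ?andbF //.
by rewrite andbT inE; exact: adj_leaf_nonleaf leaf_u euw.
Qed.

End AdjacentLeaves.

Theorem proposition10 (R : realType) (b : R) (V : finType) (e : rel V)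
    (ell : V -> R) :
  0 < b ->
  is_tree e ->
  (3 <= #|V|)%N ->
  (forall v, 0 <= ell v <= 1) ->
  \sum_(v : V) ell v <= 1 ->
  (forall v, ell v + \sum_(u in adj_leaves e v) ell u >= (#|adj_leaves e v|)%:R / b) ->
  (#|leaves e|)%:R <= b.
Proof.
move=> b_gt0 [[sym_e _] conn_e _] card_V _ sum_ell hyp_ell.
have card_leaves : (#|leaves e|)%:R = \sum_(v in ~: leaves e) (#|adj_leaves e v|)%:R :> R.
  rewrite -sum1_card natr_sum -(sum_adj_leaves sym_e conn_e card_V).
  by apply: eq_bigr => v _; rewrite sumr_const.
have sum_ell_split :
    \sum_v ell v = \sum_(v in leaves e) ell v + \sum_(v in ~: leaves e) ell v.
  rewrite (bigID (mem (leaves e))) /=; congr (_ + _).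
  by apply: eq_bigl => v; rewrite in_setC.
have sum_nonleaves :
    \sum_(v in ~: leaves e) (ell v + \sum_(u in adj_leaves e v) ell u) <= 1.
  by rewrite big_split /= (sum_adj_leaves sym_e conn_e card_V) addrC -sum_ell_split.
rewrite -(mul1r b) -ler_pdivrMr // (le_trans _ sum_nonleaves) //.
by rewrite card_leaves mulr_suml; apply: ler_sum => v _; exact: hyp_ell.
Qed.
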